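(* Let $(S,\Delta,\mathbb{P})$ be a probability space, $(U,d)$ a separable metric space, $\mathfrak{X}$ the set of $U$-valued random variables on $S$, and suppose $\mathfrak{X}^0$ has at least two distinct elements. Let $\mathcal{I}$ be an admissible ideal on $\mathbb{N}$. Then $\mathcal{I}$ is maximal if and only if $\mathcal{I}^{\mathbb{P}}\text{-}LIM^r\underline{X}=\Gamma^{r^s}_{\underline{X}}(\mathcal{I}^{\mathbb{P}})$ for every $r\geq 0$ and every sequence $\underline{X}=\{X_n\}$ in $\mathfrak{X}$.
   Context: $\mathfrak{X}^0$ is the set of equivalence classes of $\mathfrak{X}$ under almost sure equality. An ideal on $\mathbb{N}$ is a family $\mathcal{I}\subseteq\mathcal{P}(\mathbb{N})$ with $\varnothing\in\mathcal{I}$, closed under finite unions and under subsets; it is admissible if $\mathbb{N}\notin\mathcal{I}$ and $\{t\}\in\mathcal{I}$ for every $t\in\mathbb{N}$; it is maximal if $\mathbb{N}\notin\mathcal{I}$ and there is no ideal $\mathcal{J}$ with $\mathcal{I}\subsetneq\mathcal{J}$ and $\mathbb{N}\notin\mathcal{J}$. $\mathcal{I}^{\mathbb{P}}\text{-}LIM^r\underline{X}$ is the set of $X_*\in\mathfrak{X}$ with $\{n:\mathbb{P}(d(X_n,X_* )>r+\varepsilon)>\delta\}\in\mathcal{I}$ for all $\varepsilon,\delta>0$; $\Gamma^{r^s}_{\underline{X}}(\mathcal{I}^{\mathbb{P}})$ is the set of $Y\in\mathfrak{X}$ with $\{n:\mathbb{P}(d(X_n,Y)<r+\varepsilon)>1-\delta\}\notin\mathcal{I}$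 for all $\varepsilon,\delta>0$. *)

From HB Require Import structures.
From mathcomp Require Import all_boot all_order all_algebra.
From mathcomp Require Import all_classical all_reals all_analysis.
Set Implicit Arguments. Unset Strict Implicit. Unset Printing Implicit Defensive.
Import Order.TTheory GRing.Theory Num.Theory.
Local Open Scope classical_set_scope.
Local Open Scope ring_scope.

Definition is_metric (R : realType) (U : Type) (d : U -> U -> R) : Prop :=
  [/\ (forall x y, 0 <= d x y),
      (forall x y, d x y = 0 <-> x = y),
      (forall x y, d x y = d y x) &
      (forall x y z, d x z <= d x y + d y z)].

Definition metric_open (R : realType) (U : Type) (d : U -> U -> R) (O : set U) : Prop :=
  forall x, O x -> exists2 e : R, 0 < e & forall y, d x y < e -> O y.

Definition metric_separable (R : realType) (U : Type) (d : U -> U -> R) : Prop :=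
  exists D : set U, countable D /\
    forall x (e : R), 0 < e -> exists2 y, D y & d x y < e.

Definition is_rv (dT : measure_display) (T : measurableType dT) (R : realType)
  (U : Type) (d : U -> U -> R) (X : T -> U) : Prop :=
  forall O : set U, metric_open d O -> measurable (X @^-1` O).

Definition is_ideal (I : set (set nat)) : Prop :=
  [/\ I set0,
      (forall A B, I A -> I B -> I (A `|` B)) &
      (forall A B, B `<=` A -> I A -> I B)].

Definition admissible_ideal (I : set (set nat)) : Prop :=
  [/\ is_ideal I, ~ I setT & forall t : nat, I [set t]].

Definition maximal_ideal (I : set (set nat)) : Prop :=
  [/\ is_ideal I, ~ I setT &
      ~ exists J : set (set nat), [/\ is_ideal J, I `<` J & ~ J setT]].

Definition I_P_LIM (dT : measure_display) (T : measurableType dT) (R : realType)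
  (P : probability T R) (U : Type) (d : U -> U -> R) (I : set (set nat))
  (r : R) (X : nat -> T -> U) : set (T -> U) :=
  [set Xs : T -> U | is_rv d Xs /\
    forall eps delta : R, 0 < eps -> 0 < delta ->
      I [set n : nat | (delta%:E < P [set w : T | (r + eps < d (X n w) (Xs w))%R])%E]].

Definition I_P_Gamma (dT : measure_display) (T : measurableType dT) (R : realType)
  (P : probability T R) (U : Type) (d : U -> U -> R) (I : set (set nat))
  (r : R) (X : nat -> T -> U) : set (T -> U) :=
  [set Y : T -> U | is_rv d Y /\
    forall eps delta : R, 0 < eps -> 0 < delta ->
      ~ I [set n : nat | ((1 - delta)%R%:E < P [set w : T | (d (X n w) (Y w) < r + eps)%R])%E]].

From HB Require Import structures.
From mathcomp Require Import all_boot all_order all_algebra.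
From mathcomp Require Import all_classical all_reals all_analysis.
From mathcomp Require Import lra.
Import Order.TTheory GRing.Theory Num.Theory.
Local Open Scope classical_set_scope.
Local Open Scope ring_scope.

(* Write a_n = P(d(X_n, Z) > r + eps) and b_n = P(d(X_n, Z) < r + eps).
   Since a_n + b_n <= 1, the cluster set {n | b_n > 1 - delta} misses the
   divergence set {n | a_n > delta}; and with eps/2, delta/2 in the divergence
   set the two cover all of nat. Hence rough limits are rough cluster points
   for any proper ideal, and the converse holds when I is prime, i.e. contains
   every set or its complement, which is what maximality means. If some B and
   its complement both escape I, take random variables X0, Y0 that differ with
   positive probability and the sequence equal to Y0 on B and X0 off B: Y0 is
   a cluster point with r = 0 (thanks to B) but not a limit point (because
   of ~` B). *)

Lemma countable_bigcup_measurable (dT : measure_display) (T : measurableType dT)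
    (I : Type) (D : set I) (F : I -> set T) :
  countable D -> (forall i, D i -> measurable (F i)) ->
  measurable (\bigcup_(i in D) F i).
Proof.
move=> D_countable F_measurable; rewrite bigcup_set_type.
apply: countable_bigcupT_measurable; first by rewrite (eq_countable (card_setT _)).
by move=> i; exact/F_measurable/set_valP.
Qed.

Section probability_complements.
Context {dT : measure_display} {S : measurableType dT} {R : realType}
  (P : probability S R).

Lemma probabilityEFin {A : set S} : measurable A ->
  exists2 p : R, P A = p%:E & 0 <= p <= 1.
Proof.
move=> mA; have PA_fin : P A \is a fin_num by exact: fin_num_measure.
exists (fine (P A)); first by rewrite fineK.
by rewrite -!lee_fin fineK // measure_ge0 probability_le1.
Qed.

Lemma probability_cover_ge {A B : set S} (p : R) :
  measurable A -> measurable B -> A `|` B = setT ->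
  (P A <= (1 - p)%:E)%E -> (p%:E <= P B)%E.
Proof.
move=> mA mB AB_cover.
have : (P setT <= P A + P B)%E by rewrite -AB_cover; exact: measureU2.
rewrite probability_setT.
have [a -> _] := probabilityEFin mA; have [b -> _] := probabilityEFin mB.
by rewrite -EFinD !lee_fin; lra.
Qed.

Lemma probability_disjoint_lt {A B : set S} (p : R) :
  measurable A -> measurable B -> A `&` B = set0 ->
  ((1 - p)%:E < P A)%E -> (P B < p%:E)%E.
Proof.
move=> mA mB AB_disj.
have : (P A + P B <= 1)%E.
  by rewrite -measureU //; exact: probability_le1 (measurableU _ _ mA mB).
have [a -> _] := probabilityEFin mA; have [b -> _] := probabilityEFin mB.
by rewrite -EFinD lee_fin !lte_fin; lra.
Qed.

End probability_complements.

Lemma maximal_idealP {I : set (set nat)} : is_ideal I -> ~ I setT ->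
  maximal_ideal I <-> forall A, I A \/ I (~` A).
Proof.
move=> I_ideal I_proper; have [I0 IU IS] := I_ideal.
split=> [[_ _ I_max] A | I_prime].
- apply: contrapT => /not_orP[nIA nIAC]; apply: I_max.
  (* The trace ideal strictly extends I since it contains ~` A, and it is
     proper since A is not in I. *)
  exists [set B | I (B `&` A)]; split.
  + split=> [|B1 B2 IB1 IB2|B1 B2 B21 IB1] /=; first by rewrite set0I.
    * by rewrite setIUl; exact: IU.
    * by apply: IS IB1; exact: setSI.
  + split=> [B IB | JI]; first by apply: IS IB; exact: subIsetl.
    by apply: nIAC; apply: JI; rewrite /= setICl.
  + by rewrite /= setTI.
- split=> // -[J [[_ JU _] [IJ JI] J_proper]].
  have [B [JB nIB]] := nonsubset JI.
  apply: J_proper; rewrite -(setUv B).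
  by case: (I_prime B) => // IBC; apply: JU JB (IJ _ IBC).
Qed.

Section metric_events.
Context {R : realType} {U : Type} {d : U -> U -> R}.
Hypothesis d_metric : is_metric d.

Lemma metric_open_ball (q : U) (a : R) : metric_open d [set y | d q y < a].
Proof.
have [_ _ _ d_tri] := d_metric.
move=> x /= dqx; exists (a - d q x); first by rewrite subr_gt0.
by move=> y dxy; have := d_tri q x y; lra.
Qed.

Context {dT : measure_display} {S : measurableType dT}.
Hypothesis d_sep : metric_separable d.

(* Measurability of [X] and [Y] separately does not make the pair (X, Y)
   measurable in general; separability reduces {d(X, Y) < c} to countably
   many rectangles of balls centred on the dense set. *)
Lemma measurable_dist_lt {X Y : S -> U} (c : R) : is_rv d X -> is_rv d Y ->
  measurable [set w | d (X w) (Y w) < c].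
Proof.
move=> X_rv Y_rv; have [_ _ d_sym d_tri] := d_metric.
have [D [D_countable D_dense]] := d_sep.
rewrite (_ : [set w | _] = \bigcup_(q in D) \bigcup_k
    (X @^-1` [set y | d q y < k.+1%:R^-1] `&`
     Y @^-1` [set y | d q y < c - k.+1%:R^-1])).
  apply: countable_bigcup_measurable => // q _; apply: bigcupT_measurable => k.
  by apply: measurableI; [apply: X_rv | apply: Y_rv]; exact: metric_open_ball.
apply/seteqP; split=> [w /= dXY | w [q _ [k _ [/= dqX dqY]]]].
- have [k dk] := @ltr_add_invr R ((d (X w) (Y w) + c) / 2) c ltac:(lra).
  have k_gt0 : 0 < k.+1%:R^-1 :> R by rewrite invr_gt0 ltr0n.
  have [q Dq dXq] := D_dense (X w) _ k_gt0.
  exists q => //; exists k => //; split=> /=; first by rewrite d_sym.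
  have := d_tri q (X w) (Y w); rewrite (d_sym q (X w)).
  by move: (k.+1%:R^-1) dk dXq => e; lra.
- have := d_tri (X w) q (Y w); rewrite (d_sym (X w) q).
  by move: (k.+1%:R^-1) dqX dqY => e; lra.
Qed.

Lemma measurable_dist_gt {X Y : S -> U} (c : R) : is_rv d X -> is_rv d Y ->
  measurable [set w | c < d (X w) (Y w)].
Proof.
move=> X_rv Y_rv.
rewrite (_ : [set w | _] = ~` \bigcap_k [set w | d (X w) (Y w) < c + k.+1%:R^-1]).
  by apply/measurableC/bigcapT_measurable => k; exact: measurable_dist_lt.
apply/seteqP; split=> [w /= cd | w /= not_le].
- have [k ck] := ltr_add_invr cd.
  by move=> /(_ k I) /=; move: (k.+1%:R^-1) ck => e; lra.
- rewrite ltNge; apply/negP => dc; apply: not_le => k _ /=.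
  have : 0 < k.+1%:R^-1 :> R by rewrite invr_gt0 ltr0n.
  by move: (k.+1%:R^-1) => e; lra.
Qed.

End metric_events.

Section rough_limits.
Context {dT : measure_display} {S : measurableType dT} {R : realType}
  (P : probability S R) {U : Type} {d : U -> U -> R}.
Hypotheses (d_metric : is_metric d) (d_sep : metric_separable d).

Lemma not_ae_eq_dist_gt {X Y : S -> U} : is_rv d X -> is_rv d Y ->
  ~ {ae P, forall w, X w = Y w} ->
  exists e delta : R,
    [/\ 0 < e, 0 < delta & (delta%:E < P [set w | (e < d (X w) (Y w))%R])%E].
Proof.
move=> X_rv Y_rv not_ae; have [d_ge0 dE _ _] := d_metric.
pose far k := [set w | k.+1%:R^-1 < d (X w) (Y w)].
have far_measurable k : measurable (far k) by exact: measurable_dist_gt.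
have [k Pfar_neq0] : exists k, P (far k) != 0%E.
  apply: contrapT => /forallNP Pfar0; apply: not_ae.
  apply: (negligibleS _ (negligible_bigcup (mu := P) (F := far) _)).
    move=> w /= XYw; have dXY_gt0 : 0 < d (X w) (Y w).
      by rewrite lt_neqAle d_ge0 andbT eq_sym; exact/eqP/(contra_not (dE _ _).1).
    by have [k dk] := ltr_add_invr dXY_gt0; exists k => //=; rewrite add0r in dk.
  move=> k; exists (far k); split=> //.
  by apply/eqP/negbNE/negP; exact: Pfar0.
have [p Pfar p01] := probabilityEFin P (far_measurable k).
have p_gt0 : 0 < p by rewrite lt_neqAle (andP p01).1 andbT eq_sym -eqe -Pfar.
exists k.+1%:R^-1, (p / 2); split.
- by rewrite invr_gt0 ltr0n.
- by rewrite divr_gt0.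
- by rewrite Pfar lte_fin; lra.
Qed.

Context {I : set (set nat)}.
Hypothesis I_ideal : is_ideal I.

Lemma I_P_LIM_sub_Gamma (r : R) (X : nat -> S -> U) :
  (forall n, is_rv d (X n)) -> ~ I setT ->
  I_P_LIM P d I r X `<=` I_P_Gamma P d I r X.
Proof.
move=> X_rv I_proper Z [Z_rv Z_lim]; split=> // eps delta eps_gt0 delta_gt0 I_near.
have [_ IU IS] := I_ideal.
have I_far := Z_lim (eps / 2) (delta / 2) ltac:(lra) ltac:(lra).
apply: I_proper; apply: IS (IU _ _ I_near I_far) => n _ /=.
have [|not_near] :=
  pselect ((1 - delta)%:E < P [set w | (d (X n w) (Z w) < r + eps)%R])%E; [by left|right].
apply: (@lt_le_trans _ _ delta%:E); first by rewrite lte_fin; lra.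
apply: (probability_cover_ge P (A := [set w | d (X n w) (Z w) < r + eps])).
- exact: measurable_dist_lt.
- exact: measurable_dist_gt.
- apply/seteqP; split=> // w _ /=.
  by case: (ltP (d (X n w) (Z w)) (r + eps)) => ?; [left|right; lra].
- by rewrite leNgt; apply/negP.
Qed.

Lemma I_P_Gamma_sub_LIM (r : R) (X : nat -> S -> U) :
  (forall n, is_rv d (X n)) -> (forall A, I A \/ I (~` A)) ->
  I_P_Gamma P d I r X `<=` I_P_LIM P d I r X.
Proof.
move=> X_rv I_prime Z [Z_rv Z_cluster]; split=> // eps delta eps_gt0 delta_gt0.
have [_ _ IS] := I_ideal.
have [//|I_not_far] :=
  I_prime [set n | (delta%:E < P [set w | (r + eps < d (X n w) (Z w))%R])%E].
exfalso; apply: (Z_cluster eps delta eps_gt0 delta_gt0).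
apply: IS I_not_far => n /= near far.
have near_measurable := measurable_dist_lt d_metric d_sep (r + eps) (X_rv n) Z_rv.
have far_measurable := measurable_dist_gt d_metric d_sep (r + eps) (X_rv n) Z_rv.
have near_far_disj : [set w | d (X n w) (Z w) < r + eps] `&`
    [set w | r + eps < d (X n w) (Z w)] = set0.
  by apply/seteqP; split=> // w [/= ? ?]; lra.
have := probability_disjoint_lt P delta near_measurable far_measurable near_far_disj near.
by move=> /(lt_trans far); rewrite ltxx.
Qed.

Lemma I_P_Gamma_not_sub_LIM {B : set nat} {X0 Y0 : S -> U} :
  ~ I B -> ~ I (~` B) -> is_rv d X0 -> is_rv d Y0 ->
  ~ {ae P, forall w, X0 w = Y0 w} ->
  exists X : nat -> S -> U, [/\ forall n, is_rv d (X n),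
    I_P_Gamma P d I 0 X Y0 & ~ I_P_LIM P d I 0 X Y0].
Proof.
move=> nIB nIBC X0_rv Y0_rv not_ae; have [_ _ IS] := I_ideal.
have [_ dE _ _] := d_metric.
have [e [delta [e_gt0 delta_gt0 far]]] := not_ae_eq_dist_gt X0_rv Y0_rv not_ae.
exists (fun n => if `[< B n >] then Y0 else X0); split.
- by move=> n; case: asboolP.
- split=> // eps delta' eps_gt0 delta'_gt0 I_near.
  have Y0_near_Y0 : [set w | d (Y0 w) (Y0 w) < 0 + eps] = setT.
    by apply/seteqP; split=> // w _ /=; rewrite (dE _ _).2 // add0r.
  apply: nIB; apply: IS I_near => n Bn /=.
  by rewrite asboolT // Y0_near_Y0 probability_setT lte_fin; lra.
- move=> [_ /(_ e delta e_gt0 delta_gt0) I_far].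
  by apply: nIBC; apply: IS I_far => n nBn /=; rewrite asboolF // add0r.
Qed.

End rough_limits.

Theorem theorem3p15 (dT : measure_display) (S : measurableType dT) (R : realType)
  (P : probability S R) (U : Type) (d : U -> U -> R)
  (hd : is_metric d) (hsep : metric_separable d)
  (htwo : exists X Y : S -> U, [/\ is_rv d X, is_rv d Y &
            ~ {ae P, forall w, X w = Y w}])
  (I : set (set nat)) (hI : admissible_ideal I) :
  maximal_ideal I <->
  (forall (r : R) (X : nat -> S -> U), 0 <= r -> (forall n, is_rv d (X n)) ->
     I_P_LIM P d I r X = I_P_Gamma P d I r X).
Proof.
have [I_ideal I_proper _] := hI.
split=> [I_max r X _ X_rv | LIM_eq_Gamma].
- have I_prime := (maximal_idealP I_ideal I_proper).1 I_max.
  apply/seteqP; split.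
  + exact: (I_P_LIM_sub_Gamma P hd hsep I_ideal r X X_rv I_proper).
  + exact: (I_P_Gamma_sub_LIM P hd hsep I_ideal r X X_rv I_prime).
- apply/(maximal_idealP I_ideal I_proper) => B.
  apply: contrapT => /not_orP[nIB nIBC].
  have [X0 [Y0 [X0_rv Y0_rv not_ae]]] := htwo.
  have [X [X_rv Gamma_Y0 not_LIM_Y0]] :=
    I_P_Gamma_not_sub_LIM P hd hsep I_ideal nIB nIBC X0_rv Y0_rv not_ae.
  by apply: not_LIM_Y0; rewrite (LIM_eq_Gamma 0 X (lexx 0) X_rv).
Qed.
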